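(* Let $(X,d)$ be a compact metric space, $\epsilon>0$, and $A$ an $\epsilon$-approximation of $X$. Then the map $p:X\to\mathcal{U}_{4\epsilon}(A)$ given by $p(x)=\{a\in A\mid d(x,a)=d(x,A)\}$ is well-defined and continuous.
   Context: A finite set $A\subset X$ is an $\epsilon$-approximation of $X$ if for every $x\in X$ there is $a\in A$ with $d(x,a)<\epsilon$. $\mathcal{U}_{4\epsilon}(A)=\{C\subseteq A\mid C\neq\emptyset,\ \mathrm{diam}(C)<4\epsilon\}$, a finite poset under inclusion regarded as a finite $T_0$ space whose open sets are the down-sets. $d(x,A)=\min_{a\in A}d(x,a)$. *)

From HB Require Import structures.
From mathcomp Require Import all_boot all_order all_algebra.
From mathcomp Require Import all_classical all_reals all_analysis.
Set Implicit Arguments. Unset Strict Implicit. Unset Printing Implicit Defensive.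
Import Order.TTheory GRing.Theory Num.Theory.
Local Open Scope classical_set_scope.
Local Open Scope ring_scope.

Section Defs.
Context {R : realType} {X : metricType R}.

Definition eps_approx (eps : R) (A : set X) : Prop :=
  finite_set A /\ forall x : X, exists2 a, A a & mdist x a < eps.

Definition diam (C : set X) : R :=
  sup [set mdist ab.1 ab.2 | ab in C `*` C].

Definition dist_to (x : X) (A : set X) : R :=
  inf [set mdist x a | a in A].

Definition Ucover (r : R) (A : set X) : set (set X) :=
  [set C | [/\ C `<=` A, C !=set0 & diam C < r]].

(* open sets of the finite T0 space U_r(A): the down-sets (for inclusion) *)
Definition Ucover_open (r : R) (A : set X) (D : set (set X)) : Prop :=
  D `<=` Ucover r A /\
  forall C C', D C -> Ucover r A C' -> C' `<=` C -> D C'.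

Definition nearest (A : set X) (x : X) : set X :=
  [set a | A a /\ mdist x a = dist_to x A].

End Defs.

From HB Require Import structures.
From mathcomp Require Import all_boot all_order all_algebra.
From mathcomp Require Import all_classical all_reals all_analysis.
From mathcomp Require Import finmap lra.
Import Order.TTheory GRing.Theory Num.Theory.
Local Open Scope classical_set_scope.
Local Open Scope ring_scope.

(* Since A is finite, d(x, A) is a minimum, so p(x) is nonempty; its points
   are within d(x, A) < eps of x, so diam p(x) < 2 eps.  If a point b of A is
   strictly farther from x than a nearest point a, it stays strictly farther
   than a from every y near x; as A is finite, p(y) is contained in p(x) for
   y near x, and the preimage of a down-set is therefore open. *)

Lemma finite_set_argmin {d : Order.disp_t} {T : orderType d} {U : choiceType}
    {A : set U} (f : U -> T) :
  finite_set A -> A !=set0 -> exists2 a, A a & forall b, A b -> (f a <= f b)%O.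
Proof.
move=> finA [a0 Aa0].
have a0A : a0 \in fset_set A by rewrite (in_fset_set finA) in_setE.
case: (arg_minP (fun i : fset_set A => f (val i)) (isT : predT [` a0A]%fset)).
move=> i _ imin; exists (val i).
  by have := valP i; rewrite (in_fset_set finA) in_setE.
move=> b Ab.
have bA : b \in fset_set A by rewrite (in_fset_set finA) in_setE.
exact: (imin [` bA]%fset).
Qed.

Lemma open_preimage_downset (T : topologicalType) (U : Type)
    (p : T -> set U) (D : set (set U)) :
  (forall x, \forall y \near x, p y `<=` p x) ->
  (forall x y, D (p x) -> p y `<=` p x -> D (p y)) ->
  open [set x | D (p x)].
Proof.
move=> p_usc Ddown; rewrite openE => x /= Dpx.
by apply: filterS (p_usc x) => y; exact: Ddown.
Qed.

Section NearestPoints.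
Context {R : realType} {X : metricType R}.
Implicit Types (A C : set X) (x y a b : X).

Lemma dist_to_le {A} x {b} : A b -> dist_to x A <= mdist x b.
Proof.
move=> Ab; apply: ge_inf; last by exists b.
by exists 0 => _ [a _ <-]; exact: mdist_ge0.
Qed.

Lemma nearest_neq0 {A} x : finite_set A -> A !=set0 -> nearest A x !=set0.
Proof.
move=> finA A0; have [a Aa amin] := finite_set_argmin (mdist x) finA A0.
exists a; split => //; apply/le_anti; rewrite dist_to_le // andbT.
by apply: lb_le_inf; [exists (mdist x a), a | move=> _ [b Ab <-]; exact: amin].
Qed.

Lemma dist_to_lt_approx {eps A} x : eps_approx eps A -> dist_to x A < eps.
Proof. by move=> [_ /(_ x) [a Aa xa]]; exact: le_lt_trans (dist_to_le x Aa) xa. Qed.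

Lemma diam_le_twice_radius {C x r} :
  C !=set0 -> (forall c, C c -> mdist x c <= r) -> diam C <= 2 * r.
Proof.
move=> [c0 Cc0] Cr; apply: ge_sup; first by exists (mdist c0 c0), (c0, c0).
move=> _ [[b c] [/= Cb Cc] <-] /=.
have := metric_triangle b x c; rewrite (metric_sym b x).
by have := Cr _ Cb; have := Cr _ Cc; lra.
Qed.

Lemma Ucover_le {r r' A} : r <= r' -> Ucover r A `<=` Ucover r' A.
Proof. by move=> rr' C [CA C0 diamC]; split => //; exact: lt_le_trans rr'. Qed.

Lemma nearest_Ucover {eps A} x :
  eps_approx eps A -> Ucover (2 * eps) A (nearest A x).
Proof.
move=> Aeps; have [finA appr] := Aeps.
have [a Aa _] := appr x.
have p0 := nearest_neq0 x finA (ex_intro _ a Aa).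
split => //; first by move=> b [].
apply: le_lt_trans (diam_le_twice_radius (x := x) (r := dist_to x A) p0 _) _.
  by move=> c [_ ->].
by rewrite ltr_pM2l // dist_to_lt_approx.
Qed.

Lemma near_mdist_lt {x a b} :
  mdist x a < mdist x b -> \forall y \near x, mdist y a < mdist y b.
Proof.
move=> xab; apply/nbhs_ballP; exists ((mdist x b - mdist x a) / 2).
  by rewrite /= divr_gt0 // subr_gt0.
move=> y; rewrite ballEmdist /= => xy.
have := metric_triangle y x a; have := metric_triangle x y b.
by rewrite (metric_sym y x); lra.
Qed.

Lemma near_not_nearest {A x b} :
  nearest A x !=set0 -> ~ nearest A x b -> \forall y \near x, ~ nearest A y b.
Proof.
move=> [a [Aa xa]] xb; have [Ab|nAb] := pselect (A b); last first.
  by apply: nearW => y [].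
have xab : mdist x a < mdist x b.
  rewrite xa lt_neqAle dist_to_le // andbT.
  by apply/eqP => xbE; apply: xb.
apply: filterS (near_mdist_lt xab) => y yab [_ yb].
by have := dist_to_le y Aa; rewrite -yb leNgt yab.
Qed.

Lemma near_nearest_sub {A} x : finite_set A -> A !=set0 ->
  \forall y \near x, nearest A y `<=` nearest A x.
Proof.
move=> finA A0.
have near_each b : b \in fset_set A ->
    \forall y \near x, nearest A y b -> nearest A x b.
  move=> _; have [xb|xb] := pselect (nearest A x b); first exact: nearW.
  by apply: filterS (near_not_nearest (nearest_neq0 x finA A0) xb) => y yb /yb.
apply: filterS (filter_bigI _ near_each) => y yA b yb; apply: (yA b) => //=.
by case: yb => Ab _; rewrite (in_fset_set finA) in_setE.
Qed.

End NearestPoints.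

Theorem lemma4p1 (R : realType) (X : metricType R) (eps : R) (A : set X) :
  compact [set: X] -> 0 < eps -> eps_approx eps A ->
  (forall x : X, Ucover (4 * eps) A (nearest A x)) /\
  (forall D : set (set X), Ucover_open (4 * eps) A D ->
     open [set x : X | D (nearest A x)]).
Proof.
move=> _ eps0 Aeps.
have pU x : Ucover (4 * eps) A (nearest A x).
  have eps24 : 2 * eps <= 4 * eps by lra.
  exact: Ucover_le eps24 _ (nearest_Ucover x Aeps).
split => // D [_ Ddown]; apply: open_preimage_downset.
  move=> x; have [a Aa _] := Aeps.2 x.
  exact: near_nearest_sub Aeps.1 (ex_intro _ a Aa).
by move=> x y Dx yx; exact: Ddown Dx (pU y) yx.
Qed.
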